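(* A class of finite graphs has bounded clique-width (i.e., there is a constant $c$ with $\mathrm{cw}(G)\le c$ for all $G$ in the class) if and only if it has bounded multi-clique-width.
   Context: A $k$-expression is built from: atoms $i(v)$ creating a vertex $v$ with label $i\in\{1,\dots,k\}$; $\eta_{i,j}$ ($i\neq j$) adding an edge between every vertex labeled $i$ and every vertex labeled $j$; $\rho_{i\to j}$ changing every label $i$ to $j$; and $\oplus$, disjoint union. The generated graph is obtained by deleting labels. The clique-width $\mathrm{cw}(G)$ is the smallest $k$ such that $G$ is generated by a $k$-expression. A multi-$k$-expression is built as follows, where each vertex carries a (possibly empty) set of labels from $\{1,\dots,k\}$: atoms $m\langle i_1,\dots,i_\ell\rangle$ (with $m$ a positive integer and $i_1<\dots<i_\ell\le k$, possibly $\ell=0$) create $m$ vertices, each with label set $\{i_1,\dots,i_\ell\}$; $\eta_{i,j}$ creates an edge between every vertex having label $i$ and every vertex having label $j$, allowed only when no vertex has both labels $i$ and $j$; $\rho_{i\to S}$ for $S\subseteq\{1,\dots,k\}$ replaces label $i$ by the set $S$ (a vertex with label set $S'\ni i$ gets $(S'\setminus\{i\})\cup S$); $\varepsilon_i$ deletes label $i$ from all vertices; $\oplus$ is disjoint union. The generated graph is obtained by deleting all labels. The multi-clique-width $\mathrm{mcw}(G)$ is the smallest $k$ such that $G$ is generated by a multi-$k$-expression. *)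

From mathcomp Require Import all_boot.
Set Implicit Arguments. Unset Strict Implicit. Unset Printing Implicit Defensive.

Record graph := Graph {
  gn : nat;
  gadj : rel 'I_gn;
  gadj_sym : symmetric gadj;
  gadj_irr : irreflexive gadj }.

(** A (generic) vertex-labelled graph on vertices 0..n-1 (values outside the
    range are irrelevant). *)

Inductive kexp :=
  | KAtom (i : nat)
  | KEta (i j : nat) (e : kexp)
  | KRho (i j : nat) (e : kexp)
  | KUnion (e1 e2 : kexp).

Fixpoint keval (e : kexp) : nat * (nat -> nat) * (nat -> nat -> bool) :=
  match e with
  | KAtom i => (1, fun _ => i, fun _ _ => false)
  | KEta i j e =>
      let: (n, lab, adj) := keval e in
      (n, lab, fun u v => adj u v ||
         [&& u < n, v < n &
             ((lab u == i) && (lab v == j)) || ((lab u == j) && (lab v == i))])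
  | KRho i j e =>
      let: (n, lab, adj) := keval e in
      (n, fun v => if lab v == i then j else lab v, adj)
  | KUnion e1 e2 =>
      let: (n1, lab1, adj1) := keval e1 in
      let: (n2, lab2, adj2) := keval e2 in
      (n1 + n2,
       fun v => if v < n1 then lab1 v else lab2 (v - n1),
       fun u v => if (u < n1) && (v < n1) then adj1 u v
                  else if (n1 <= u) && (n1 <= v) then adj2 (u - n1) (v - n1)
                  else false)
  end.

Definition in_labels (k i : nat) : bool := (1 <= i) && (i <= k).

Fixpoint kexp_ok (k : nat) (e : kexp) : bool :=
  match e with
  | KAtom i => in_labels k i
  | KEta i j e => [&& in_labels k i, in_labels k j, i != j & kexp_ok k e]
  | KRho i j e => [&& in_labels k i, in_labels k j & kexp_ok k e]
  | KUnion e1 e2 => kexp_ok k e1 && kexp_ok k e2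
  end.

Definition iso_to (n : nat) (adj : nat -> nat -> bool) (G : graph) : Prop :=
  n = gn G /\
  exists f : 'I_(gn G) -> nat,
    injective f /\ (forall x, f x < n) /\
    (forall x y, gadj x y = adj (f x) (f y)).

Definition kgenerates (e : kexp) (G : graph) : Prop :=
  let: (n, _, adj) := keval e in iso_to n adj G.

Definition cw_le (G : graph) (c : nat) : Prop :=
  exists k e, k <= c /\ kexp_ok k e /\ kgenerates e G.

Inductive mexp :=
  | MAtom (m : nat) (L : seq nat)
  | MEta (i j : nat) (e : mexp)
  | MRho (i : nat) (L : seq nat) (e : mexp)
  | MEps (i : nat) (e : mexp)
  | MUnion (e1 e2 : mexp).

(** semantics: (number of vertices, lab v l = "vertex v carries label l", adjacency) *)
Fixpoint meval (e : mexp) : nat * (nat -> nat -> bool) * (nat -> nat -> bool) :=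
  match e with
  | MAtom m L => (m, fun _ l => l \in L, fun _ _ => false)
  | MEta i j e =>
      let: (n, lab, adj) := meval e in
      (n, lab, fun u v => adj u v ||
         [&& u < n, v < n &
             (lab u i && lab v j) || (lab u j && lab v i)])
  | MRho i L e =>
      let: (n, lab, adj) := meval e in
      (n, fun v l => if lab v i then ((l != i) && lab v l) || (l \in L)
                     else lab v l, adj)
  | MEps i e =>
      let: (n, lab, adj) := meval e in
      (n, fun v l => (l != i) && lab v l, adj)
  | MUnion e1 e2 =>
      let: (n1, lab1, adj1) := meval e1 in
      let: (n2, lab2, adj2) := meval e2 in
      (n1 + n2,
       fun v => if v < n1 then lab1 v else lab2 (v - n1),
       fun u v => if (u < n1) && (v < n1) then adj1 u v
                  else if (n1 <= u) && (n1 <= v) then adj2 (u - n1) (v - n1)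
                  else false)
  end.

Fixpoint mexp_ok (k : nat) (e : mexp) : bool :=
  match e with
  | MAtom m L => (0 < m) && all (in_labels k) L
  | MEta i j e =>
      let: (n, lab, _) := meval e in
      [&& in_labels k i, in_labels k j, i != j,
          [forall v : 'I_n, ~~ (lab v i && lab v j)] & mexp_ok k e]
  | MRho i L e => [&& in_labels k i, all (in_labels k) L & mexp_ok k e]
  | MEps i e => in_labels k i && mexp_ok k e
  | MUnion e1 e2 => mexp_ok k e1 && mexp_ok k e2
  end.

Definition mgenerates (e : mexp) (G : graph) : Prop :=
  let: (n, _, adj) := meval e in iso_to n adj G.

Definition mcw_le (G : graph) (c : nat) : Prop :=
  exists k e, k <= c /\ mexp_ok k e /\ mgenerates e G.

Definition graph_class := graph -> Prop.

Definition bounded_cw (C : graph_class) : Prop :=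
  exists c, forall G, C G -> cw_le G c.

Definition bounded_mcw (C : graph_class) : Prop :=
  exists c, forall G, C G -> mcw_le G c.

From mathcomp Require Import all_boot.
Set Implicit Arguments. Unset Strict Implicit. Unset Printing Implicit Defensive.

(** A k-expression is a multi-k-expression in which every vertex carries
    exactly one label, so cw(G) <= c gives mcw(G) <= c.  Conversely, a
    multi-k-expression is simulated by a k-expression whose labels are the
    label sets: the N = 2^k subsets of {1..k} are coded by 1..N.  Then
    rho_{i -> S} and epsilon_i act on each code as a function on sets,
    eta_{i,j} becomes the eta's between all pairs of codes of sets containing
    i and j respectively, and an atom of m vertices is a union of m single
    vertices.  A function on codes is not a single rho, but it is a sequence
    of rho's through N auxiliary labels N+1..2N, so mcw(G) <= c gives
    cw(G) <= 2 * 2^c. *)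

Lemma eq_iso_to n adj1 adj2 G :
  adj1 =2 adj2 -> iso_to n adj1 G <-> iso_to n adj2 G.
Proof.
move=> eq_adj; split=> -[-> [f [f_inj [f_lt f_adj]]]]; split=> //;
  by exists f; split=> //; split=> // x y; rewrite f_adj eq_adj.
Qed.

Fixpoint mexp_of_kexp (e : kexp) : mexp :=
  match e with
  | KAtom i => MAtom 1 [:: i]
  | KEta i j e => MEta i j (mexp_of_kexp e)
  | KRho i j e => MRho i [:: j] (mexp_of_kexp e)
  | KUnion e1 e2 => MUnion (mexp_of_kexp e1) (mexp_of_kexp e2)
  end.

Lemma mexp_of_kexpP k e n lab adj : keval e = (n, lab, adj) -> kexp_ok k e ->
  mexp_ok k (mexp_of_kexp e) /\
  exists mlab madj, [/\ meval (mexp_of_kexp e) = (n, mlab, madj),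
    madj =2 adj & forall v l, mlab v l = (l == lab v)].
Proof.
elim: e n lab adj => [i|i j e IH|i j e IH|e1 IH1 e2 IH2] n lab adj /=.
- case=> <- <- <- ->; split=> //; do 2 eexists; split=> // v l.
  by rewrite /= inE.
- case E: (keval e) => [[n0 lab0] adj0] [<- <- <-] /and4P[Hi Hj Hij Hok].
  have [okm [mlab [madj [-> Hadj Hlab]]]] := IH _ _ _ E Hok.
  split.
    rewrite Hi Hj Hij okm andbT; apply/forallP=> v; rewrite !Hlab.
    by apply: contra Hij => /andP[/eqP <- /eqP <-].
  do 2 eexists; split=> // u v; rewrite Hadj !Hlab.
  by rewrite ![_ == lab0 _]eq_sym.
- case E: (keval e) => [[n0 lab0] adj0] [<- <- <-] /and3P[Hi Hj Hok].
  have [okm [mlab [madj [-> Hadj Hlab]]]] := IH _ _ _ E Hok.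
  split; first by rewrite /= Hi Hj okm.
  do 2 eexists; split=> // v l /=; rewrite !Hlab inE [i == _]eq_sym.
  by case: eqP => [->|]; rewrite ?andNb.
- case E1: (keval e1) => [[n1 lab1] adj1]; case E2: (keval e2) => [[n2 lab2] adj2].
  case=> <- <- <- /andP[Ok1 Ok2].
  have [okm1 [mlab1 [madj1 [-> Hadj1 Hlab1]]]] := IH1 _ _ _ E1 Ok1.
  have [okm2 [mlab2 [madj2 [-> Hadj2 Hlab2]]]] := IH2 _ _ _ E2 Ok2.
  split; first by rewrite okm1.
  do 2 eexists; split=> [|u v|v l]; first reflexivity.
    by rewrite /= Hadj1 Hadj2.
  by rewrite /=; case: ifP => _; rewrite ?Hlab1 ?Hlab2.
Qed.

Lemma cw_le_mcw_le G c : cw_le G c -> mcw_le G c.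
Proof.
case=> k [e [le_kc [ok_e]]]; rewrite /kgenerates.
case E: (keval e) => [[n lab] adj] iso_e.
have [okm [? [? [Em Hadj _]]]] := mexp_of_kexpP E ok_e.
exists k, (mexp_of_kexp e); split=> //; split=> //.
by rewrite /mgenerates Em; apply/(eq_iso_to _ _ Hadj).
Qed.

Definition rho_label (x : nat) (p : nat * nat) : nat := if x == p.1 then p.2 else x.

Definition rhos (ps : seq (nat * nat)) (e : kexp) : kexp :=
  foldl (fun e p => KRho p.1 p.2 e) e ps.

Definition etas (ps : seq (nat * nat)) (e : kexp) : kexp :=
  foldl (fun e p => KEta p.1 p.2 e) e ps.

Lemma keval_rhos ps e n lab adj : keval e = (n, lab, adj) ->
  keval (rhos ps e) = (n, fun v => foldl rho_label (lab v) ps, adj).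
Proof.
elim: ps e lab => [|p ps IH] e lab Ee; rewrite /rhos /= ?Ee //.
by apply: (IH _ (fun v => rho_label (lab v) p)); rewrite /= Ee.
Qed.

Lemma kexp_ok_rhos k ps e : kexp_ok k (rhos ps e) =
  kexp_ok k e && all (fun p => in_labels k p.1 && in_labels k p.2) ps.
Proof.
elim: ps e => [|p ps IH] e /=; first by rewrite andbT.
by rewrite /rhos /= -/(rhos ps _) IH /=; case: (kexp_ok k e); rewrite ?andbT ?andbF.
Qed.

Lemma keval_etas ps e n lab adj : keval e = (n, lab, adj) ->
  exists2 adj', keval (etas ps e) = (n, lab, adj') & forall u v, adj' u v =
    adj u v || [&& u < n, v < n & has (fun p => (lab u == p.1) && (lab v == p.2)
                                       || (lab u == p.2) && (lab v == p.1)) ps].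
Proof.
elim: ps e adj => [|p ps IH] e adj Ee /=.
  by exists adj => [|u v]; rewrite /etas /= ?Ee // !andbF orbF.
have := IH (KEta p.1 p.2 e); rewrite /= Ee => /(_ _ erefl) [adj' Eps Hadj'].
exists adj' => [|u v]; first by rewrite /etas /= -/(etas ps _) Eps.
by rewrite Hadj'; case: (adj u v); case: (u < n); case: (v < n).
Qed.

Lemma kexp_ok_etas k ps e : kexp_ok k (etas ps e) =
  kexp_ok k e && all (fun p => [&& in_labels k p.1, in_labels k p.2 & p.1 != p.2]) ps.
Proof.
elim: ps e => [|p ps IH] e /=; first by rewrite andbT.
by rewrite /etas /= -/(etas ps _) IH /=; case: (kexp_ok k e); rewrite ?andbT ?andbF.
Qed.

Lemma foldl_rho_label_map (T : eqType) (a b : T -> nat) (s : seq T) x :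
  injective a -> (forall y z, b y != a z) -> x \in s ->
  foldl rho_label (a x) [seq (a y, b y) | y <- s] = b x.
Proof.
move=> inj_a ba_neq; elim: s => // y s IH.
rewrite inE /= [rho_label (a x) _]/rho_label /= (inj_eq inj_a).
case: eqP => [->|_ /= x_s]; last exact: IH.
elim: s {IH} => //= z s.
by rewrite [rho_label (b y) _]/rho_label /= (negbTE (ba_neq y z)).
Qed.

Section Relabel.
Variables (N : nat) (f : 'I_N -> 'I_N).

Definition relabel (t : kexp) : kexp :=
  rhos [seq (x.+1 + N, x.+1) | x : 'I_N <- enum 'I_N]
       (rhos [seq (x.+1, (f x).+1 + N) | x : 'I_N <- enum 'I_N] t).

Lemma keval_relabel t n lab adj : keval t = (n, lab, adj) ->
  exists2 lab', keval (relabel t) = (n, lab', adj) &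
    forall v (x : 'I_N), lab v = x.+1 -> lab' v = (f x).+1.
Proof.
move=> Et; eexists; first by do 2 apply: keval_rhos; exact: Et.
move=> v x /= ->.
have succ_inj : injective (fun y : 'I_N => y.+1) by move=> y z [] /val_inj.
have high_neq_low (y z : 'I_N) : y.+1 + N != z.+1.
  by rewrite gtn_eqF // addSn ltnS (leq_trans (ltn_ord z)) ?leq_addl.
rewrite (foldl_rho_label_map succ_inj (fun y z => high_neq_low (f y) z)) ?mem_enum //.
have high_inj : injective (fun y : 'I_N => y.+1 + N) by move=> y z /addIn /succ_inj.
have low_neq_high (y z : 'I_N) : y.+1 != z.+1 + N by rewrite eq_sym.
by rewrite (foldl_rho_label_map high_inj low_neq_high) ?mem_enum.
Qed.

Lemma kexp_ok_relabel t : kexp_ok (2 * N) t -> kexp_ok (2 * N) (relabel t).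
Proof.
have in_low (x : 'I_N) : in_labels (2 * N) x.+1.
  by rewrite /in_labels /= (leq_trans (ltn_ord x)) // leq_pmull.
have in_high (x : 'I_N) : in_labels (2 * N) (x.+1 + N).
  by rewrite /in_labels addn_gt0 /= mul2n -addnn leq_add2r.
move=> ok_t; rewrite /relabel !kexp_ok_rhos ok_t /=.
by apply/andP; split; apply/allP => _ /mapP[x _ ->] /=; rewrite in_low in_high.
Qed.

End Relabel.

Fixpoint kcopies (i m : nat) : kexp :=
  if m is m'.+1 then KUnion (KAtom i) (kcopies i m') else KAtom i.

Lemma keval_kcopies i m : exists lab adj,
  [/\ keval (kcopies i m) = (m.+1, lab, adj), lab =1 (fun=> i)
    & adj =2 (fun _ _ => false)].
Proof.
elim: m => [|m [lab [adj [Em Hlab Hadj]]]] /=; first by do 2 eexists.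
rewrite Em; do 2 eexists; split=> [|v|u v] //=; first by case: ifP.
by rewrite Hadj; case: ifP => //; case: ifP.
Qed.

Lemma kexp_ok_kcopies k i m : kexp_ok k (kcopies i m) = in_labels k i.
Proof. by elim: m => //= m ->; rewrite andbb. Qed.

Section SetLabels.
Variable k : nat.

Definition code (A : {set 'I_k}) : nat := (enum_rank A).+1.

Definition has_label (A : {set 'I_k}) (i : nat) : bool := [exists x in A, x.+1 == i].

Definition set_of_labels (lab : nat -> bool) : {set 'I_k} :=
  [set x : 'I_k | lab x.+1].

Lemma has_label_set_of_labels lab i :
  in_labels k i -> has_label (set_of_labels lab) i = lab i.
Proof.
case: i => // i /andP[_ lt_ik]; apply/existsP/idP => [[x /andP[]]|lab_i].
  by rewrite inE => lab_x /eqP[<-].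
by exists (Ordinal lt_ik); rewrite inE lab_i /=.
Qed.

Lemma code_inj : injective code.
Proof. by move=> A B [] /val_inj /enum_rank_inj. Qed.

Lemma in_labels_code A : in_labels (2 * #|{set 'I_k}|) (code A).
Proof.
by rewrite /in_labels /= (leq_trans (ltn_ord (enum_rank A))) // leq_pmull.
Qed.

Definition code_map (g : {set 'I_k} -> {set 'I_k}) (x : 'I_#|{set 'I_k}|) :=
  enum_rank (g (enum_val x)).

Lemma keval_relabel_sets g t n lab adj : keval t = (n, lab, adj) ->
  exists2 lab', keval (relabel (code_map g) t) = (n, lab', adj) &
    forall v A, lab v = code A -> lab' v = code (g A).
Proof.
move=> /(keval_relabel (code_map g))[lab' Et Hlab'].
exists lab' => // v A /Hlab' ->.
by rewrite /code_map enum_rankK.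
Qed.

Definition eta_pairs (i j : nat) : seq (nat * nat) :=
  [seq (code p.1, code p.2) |
    p <- [seq (X, Y) | X <- enum {set 'I_k}, Y <- enum {set 'I_k}]
    & [&& has_label p.1 i, has_label p.2 j & p.1 != p.2]].

Lemma kexp_ok_eta_pairs i j : all (fun p =>
  [&& in_labels (2 * #|{set 'I_k}|) p.1, in_labels (2 * #|{set 'I_k}|) p.2 & p.1 != p.2])
  (eta_pairs i j).
Proof.
apply/allP => p /mapP[[X Y]]; rewrite mem_filter /= => /andP[/and3P[_ _ neXY] _] ->.
by rewrite !in_labels_code (inj_eq code_inj).
Qed.

Lemma has_eta_pairs i j U V :
  ~~ (has_label U i && has_label U j) ->
  has (fun p => (code U == p.1) && (code V == p.2) || (code U == p.2) && (code V == p.1))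
      (eta_pairs i j) = (has_label U i && has_label V j) || (has_label U j && has_label V i).
Proof.
move=> U_ij; apply/hasP/idP => [[p /mapP[[X Y]]]|].
  rewrite mem_filter /= => /andP[/and3P[Xi Yj _] _] -> /=.
  by rewrite !(inj_eq code_inj) => /orP[]/andP[/eqP-> /eqP->]; rewrite Xi Yj ?orbT.
have pairs_all X Y :
  (X, Y) \in [seq (X, Y) | X <- enum {set 'I_k}, Y <- enum {set 'I_k}].
  by apply: allpairs_f; rewrite mem_enum.
case/orP=> /andP[hU hV].
  exists (code U, code V); last by rewrite /= !eqxx.
  apply/mapP; exists (U, V) => //; rewrite mem_filter pairs_all hU hV andbT /=.
  by apply: contraNneq U_ij => eqUV; rewrite hU eqUV hV.
exists (code V, code U); last by rewrite /= !eqxx orbT.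
apply/mapP; exists (V, U) => //; rewrite mem_filter pairs_all hU hV andbT /=.
by apply: contraNneq U_ij => eqVU; rewrite hU -eqVU hV.
Qed.

Definition rho_set (i : nat) (L : seq nat) (A : {set 'I_k}) : {set 'I_k} :=
  if has_label A i then [set x : 'I_k | (x.+1 != i) && (x \in A) || (x.+1 \in L)]
  else A.

Definition eps_set (i : nat) (A : {set 'I_k}) : {set 'I_k} := [set x in A | x.+1 != i].

Fixpoint kexp_of_mexp (e : mexp) : kexp :=
  match e with
  | MAtom m L => kcopies (code (set_of_labels (fun l => l \in L))) m.-1
  | MEta i j e => etas (eta_pairs i j) (kexp_of_mexp e)
  | MRho i L e => relabel (code_map (rho_set i L)) (kexp_of_mexp e)
  | MEps i e => relabel (code_map (eps_set i)) (kexp_of_mexp e)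
  | MUnion e1 e2 => KUnion (kexp_of_mexp e1) (kexp_of_mexp e2)
  end.

Lemma kexp_of_mexpP e n lab adj : meval e = (n, lab, adj) -> mexp_ok k e ->
  kexp_ok (2 * #|{set 'I_k}|) (kexp_of_mexp e) /\
  exists klab kadj, [/\ keval (kexp_of_mexp e) = (n, klab, kadj), kadj =2 adj &
    forall v, klab v = code (set_of_labels (lab v))].
Proof.
elim: e n lab adj => [m L|i j e IH|i L e IH|i e IH|e1 IH1 e2 IH2] n lab adj /=.
- case=> <- <- <- /andP[m_gt0 _]; rewrite kexp_ok_kcopies in_labels_code.
  set A := set_of_labels (fun l => l \in L).
  have [klab [kadj [Ek Hlab Hadj]]] := keval_kcopies (code A) m.-1.
  by split=> //; exists klab, kadj; rewrite Ek prednK.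
- case E: (meval e) => [[n0 lab0] adj0] [<- <- <-].
  case/and5P=> Hi Hj _ /forallP no_ij ok_e.
  have [ok_t [klab [kadj [Et Hadj Hlab]]]] := IH _ _ _ E ok_e.
  have [kadj' Ee Hadj'] := keval_etas (eta_pairs i j) Et.
  split; first by rewrite kexp_ok_etas ok_t kexp_ok_eta_pairs.
  exists klab, kadj'; split=> // u v; rewrite Hadj' Hadj /=; congr (_ || _).
  case: ltnP => //= lt_u; case: ltnP => //= lt_v.
  rewrite !Hlab has_eta_pairs !(has_label_set_of_labels _ Hi)
    !(has_label_set_of_labels _ Hj) //.
  exact: no_ij (Ordinal lt_u).
- case E: (meval e) => [[n0 lab0] adj0] [<- <- <-] /and3P[Hi _ ok_e].
  have [ok_t [klab [kadj [Et Hadj Hlab]]]] := IH _ _ _ E ok_e.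
  have [klab' Er Hlab'] := keval_relabel_sets (rho_set i L) Et.
  split; first exact: kexp_ok_relabel.
  exists klab', kadj; split=> // v.
  rewrite (Hlab' _ _ (Hlab v)) /rho_set has_label_set_of_labels //.
  by case: (lab0 v i) => //; congr code; apply/setP => x; rewrite !inE.
- case E: (meval e) => [[n0 lab0] adj0] [<- <- <-] /andP[_ ok_e].
  have [ok_t [klab [kadj [Et Hadj Hlab]]]] := IH _ _ _ E ok_e.
  have [klab' Er Hlab'] := keval_relabel_sets (eps_set i) Et.
  split; first exact: kexp_ok_relabel.
  exists klab', kadj; split=> // v; rewrite (Hlab' _ _ (Hlab v)).
  by congr code; apply/setP => x; rewrite !inE andbC.
- case E1: (meval e1) => [[n1 lab1] adj1]; case E2: (meval e2) => [[n2 lab2] adj2].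
  case=> <- <- <- /andP[ok1 ok2].
  have [ok_t1 [klab1 [kadj1 [Et1 Hadj1 Hlab1]]]] := IH1 _ _ _ E1 ok1.
  have [ok_t2 [klab2 [kadj2 [Et2 Hadj2 Hlab2]]]] := IH2 _ _ _ E2 ok2.
  split; first by rewrite /= ok_t1.
  do 2 eexists; split=> [|u v|v] /=; first by rewrite Et1 Et2.
    by rewrite /= Hadj1 Hadj2.
  by rewrite /=; case: ifP => _; rewrite ?Hlab1 ?Hlab2.
Qed.

Lemma card_label_sets : #|{set 'I_k}| = 2 ^ k.
Proof. by rewrite -cardsT -powersetT card_powerset cardsT card_ord. Qed.

End SetLabels.

Lemma mcw_le_cw_le G c : mcw_le G c -> cw_le G (2 * 2 ^ c).
Proof.
case=> k [e [le_kc [ok_e]]]; rewrite /mgenerates.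
case E: (meval e) => [[n lab] adj] iso_e.
have [ok_t [? [? [Et Hadj _]]]] := kexp_of_mexpP E ok_e.
exists (2 * #|{set 'I_k}|), (kexp_of_mexp k e); split.
  by rewrite card_label_sets leq_mul2l leq_pexp2l.
by split=> //; rewrite /kgenerates Et; apply/(eq_iso_to _ _ Hadj).
Qed.

Theorem mainTheorem3 (C : graph_class) : bounded_cw C <-> bounded_mcw C.
Proof.
split=> -[c bounded_C].
  by exists c => G /bounded_C; exact: cw_le_mcw_le.
by exists (2 * 2 ^ c) => G /bounded_C; exact: mcw_le_cw_le.
Qed.
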